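(* There is an absolute constant $C>0$ such that the following holds. Let $G=(V,E)$ be an unweighted graph with maximum vertex degree $d_{\max}$, and let $s,t\in V$ be distinct. Then there is a subset $S\subset V$ with $s\in S$, $t\in V\setminus S$, and $$ \frac{B_{st}^{2}}{R_{st}}\leq C\,d_{\max}\,\Theta(S)^{-2}. $$
   Context: For an unweighted graph with $n$ vertices, $L=D-A$ is the graph Laplacian, $L^{+}$ its Moore–Penrose pseudoinverse, $L^{2+}=(L^+)^2$, and $1_v$ the indicator vector of vertex $v$. The effective resistance is $R_{st}=(1_s-1_t)^{T}L^{+}(1_s-1_t)$ and the biharmonic distance is $B_{st}=\sqrt{(1_s-1_t)^{T}L^{2+}(1_s-1_t)}$. For a nonempty proper subset $S\subset V$, $E(S,V\setminus S)$ is the set of edges with one endpoint in $S$ and one in $V\setminus S$, and $\Theta(S)=\frac{n|E(S,V\setminus S)|}{|S||V\setminus S|}$ (the paper states the conclusion as $B_{st}^2/R_{st}\in O(d_{\max}\Theta(S)^{-2})$). *)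

From HB Require Import structures.
From mathcomp Require Import all_boot all_order all_algebra.
From mathcomp Require Import reals.
Set Implicit Arguments. Unset Strict Implicit. Unset Printing Implicit Defensive.
Import Order.TTheory GRing.Theory Num.Theory.
Local Open Scope ring_scope.

Definition simple_graph (n : nat) (adj : rel 'I_n) : Prop :=
  symmetric adj /\ irreflexive adj.

Definition deg (n : nat) (adj : rel 'I_n) (v : 'I_n) : nat :=
  #|[set u | adj v u]|.

Definition dmax (n : nat) (adj : rel 'I_n) : nat :=
  \max_(v < n) deg adj v.

Definition laplacian (R : ringType) (n : nat) (adj : rel 'I_n) : 'M[R]_n :=
  \matrix_(i, j) ((deg adj i)%:R *+ (i == j) - (adj i j)%:R).

Definition is_pinv (R : ringType) (n : nat) (A X : 'M[R]_n) : Prop :=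
  [/\ A *m X *m A = A, X *m A *m X = X,
      (A *m X)^T = A *m X & (X *m A)^T = X *m A].

Definition ind (R : ringType) (n : nat) (v : 'I_n) : 'cV[R]_n :=
  delta_mx v ord0.

Definition qform (R : ringType) (n : nat) (M : 'M[R]_n) (x : 'cV[R]_n) : R :=
  (x^T *m M *m x) ord0 ord0.

Definition eff_res (R : ringType) (n : nat) (Lp : 'M[R]_n) (s t : 'I_n) : R :=
  qform Lp (ind R s - ind R t).

(* biharmonic distance, with L^{2+} = Lp *m Lp *)
Definition biharm (R : rcfType) (n : nat) (Lp : 'M[R]_n) (s t : 'I_n) : R :=
  Num.sqrt (qform (Lp *m Lp) (ind R s - ind R t)).

(* |E(S, V \ S)| : each undirected edge counted once (oriented from S) *)
Definition cut_size (n : nat) (adj : rel 'I_n) (S : {set 'I_n}) : nat :=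
  #|[set p : 'I_n * 'I_n | [&& p.1 \in S, p.2 \notin S & adj p.1 p.2]]|.

Definition Theta (R : fieldType) (n : nat) (adj : rel 'I_n) (S : {set 'I_n}) : R :=
  (n * cut_size adj S)%:R / (#|S| * #|~: S|)%:R.

From HB Require Import structures.
From mathcomp Require Import all_boot all_order all_algebra.
From mathcomp Require Import reals.
From mathcomp Require Import ring lra.
Import Order.TTheory GRing.Theory Num.Theory.
Local Open Scope ring_scope.

Set Implicit Arguments.
Unset Strict Implicit.
Unset Printing Implicit Defensive.

(* Write b = 1_s - 1_t and y = L^+ b, so that R_st = y_s - y_t and
   B_st^2 = |y|^2.  If L y <> b, the residual b - L y is a nonzero vector of
   ker L whose entry at s exceeds the one at t; it is constant across edges, so
   its level set through s is a cut with no edge at all.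
   Otherwise y is the potential of a unit s-t current.  Clamping y to
   [y_t, y_s] gives a vector w that agrees with y at s and t and has no larger
   Dirichlet energy E (the sum of (w_u - w_v)^2 over ordered adjacent pairs,
   E(x) = 2 x^T L x); this forces w - y into ker L, and since y is orthogonal
   to ker L, |y|^2 <= |w - mean w|^2.  A Cheeger-type sweep over the level sets
   {w >= w_x}, through the layer-cake decomposition of the signed square
   (r - c)|r - c| around the mean c of w, finds such a level set S separating
   s from t with Theta(S)^2 |w - mean w|^2 <= 4 d_max E(w) <= 8 d_max R_st. *)

Section PseudoInverse.
Variables (R : comNzRingType) (n : nat) (A : 'M[R]_n).

Lemma is_pinv_trmx X : is_pinv A X -> is_pinv A^T X^T.
Proof.
case=> AXA XAX AX_sym XA_sym; split.
- by rewrite -!trmx_mul mulmxA AXA.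
- by rewrite -!trmx_mul mulmxA XAX.
- by rewrite -trmx_mul XA_sym.
- by rewrite -trmx_mul AX_sym.
Qed.

Lemma is_pinv_unique X Y : is_pinv A X -> is_pinv A Y -> X = Y.
Proof.
case=> AXA XAX AX_sym XA_sym [AYA YAY AY_sym YA_sym].
have YE : Y = Y *m A *m X.
  rewrite -{1}YAY -mulmxA -AY_sym trmx_mul -{1}AXA !trmx_mul.
  by rewrite mulmxA -trmx_mul AY_sym -mulmxA -trmx_mul AX_sym !mulmxA YAY.
have XE : X = Y *m A *m X.
  rewrite -{1}XAX -XA_sym trmx_mul -{1}AYA !trmx_mul.
  rewrite !mulmxA -trmx_mul YA_sym -(mulmxA _ A^T) -trmx_mul XA_sym.
  by rewrite !mulmxA -(mulmxA _ X) -mulmxA XAX.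
by rewrite XE -YE.
Qed.

Hypothesis A_sym : A^T = A.
Variable X : 'M[R]_n.
Hypothesis X_pinv : is_pinv A X.

Lemma trmx_pinv : X^T = X.
Proof. by have := is_pinv_trmx X_pinv; rewrite A_sym => /is_pinv_unique; apply. Qed.

Lemma pinv_mulC : X *m A = A *m X.
Proof. by case: X_pinv => _ _ AX_sym _; rewrite -AX_sym trmx_mul trmx_pinv A_sym. Qed.

Lemma pinv_ker m (v : 'M[R]_(n, m)) : A *m v = 0 -> X *m v = 0.
Proof.
case: X_pinv => _ XAX _ _ Av0.
by rewrite -XAX -(mulmxA X A) -pinv_mulC -!mulmxA Av0 !mulmx0.
Qed.

Lemma pinv_residual_ker m (v : 'M[R]_(n, m)) : A *m (v - A *m (X *m v)) = 0.
Proof.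
case: X_pinv => AXA _ _ _.
by rewrite mulmxBr !mulmxA -(mulmxA A A) -pinv_mulC mulmxA AXA subrr.
Qed.


Lemma pinv_orth_ker m (v : 'M[R]_(n, m)) (k : 'cV[R]_n) :
  A *m k = 0 -> (X *m v)^T *m k = 0.
Proof. by move=> Ak0; rewrite trmx_mul trmx_pinv -mulmxA (pinv_ker Ak0) mulmx0. Qed.

End PseudoInverse.

Section ColumnVectors.
Variables (R : comNzRingType) (n : nat).

Lemma cV_dotE (x z : 'cV[R]_n) :
  (x^T *m z) ord0 ord0 = \sum_i x i ord0 * z i ord0.
Proof. by rewrite mxE; apply: eq_bigr => i _; rewrite mxE. Qed.

Lemma cV_dot_indB (x : 'cV[R]_n) s t :
  (x^T *m (ind R s - ind R t)) ord0 ord0 = x s ord0 - x t ord0.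
Proof.
have dot_ind v : (x^T *m ind R v) ord0 ord0 = x v ord0.
  rewrite cV_dotE (bigD1 v) //= big1 => [|i /negbTE iv]; rewrite !mxE ?iv ?mulr0 //.
  by rewrite !eqxx mulr1 addr0.
by rewrite mulmxBr -!dot_ind !mxE.
Qed.

Lemma cV_dotC (x z : 'cV[R]_n) : (x^T *m z) ord0 ord0 = (z^T *m x) ord0 ord0.
Proof. by rewrite !cV_dotE; apply: eq_bigr => i _; rewrite mulrC. Qed.

End ColumnVectors.

Lemma cV_sqnorm_ge0 (R : realDomainType) n (x : 'cV[R]_n) : 0 <= (x^T *m x) ord0 ord0.
Proof. by rewrite cV_dotE sumr_ge0 // => i _; rewrite -expr2 sqr_ge0. Qed.

Lemma cV_sqnorm_gt0 (R : realDomainType) n (x : 'cV[R]_n) :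
  x != 0 -> 0 < (x^T *m x) ord0 ord0.
Proof.
move=> x_neq0; rewrite lt_def cV_sqnorm_ge0 andbT cV_dotE.
apply: contra x_neq0 => /eqP/psumr_eq0P x0; apply/eqP/matrixP => i j.
by rewrite ord1 mxE; apply/eqP; rewrite -sqrf_eq0 expr2 x0 // => k _; rewrite -expr2 sqr_ge0.
Qed.

Lemma eff_resE (R : comNzRingType) n (Lp : 'M[R]_n) s t :
  eff_res Lp s t
    = (Lp *m (ind R s - ind R t)) s ord0 - (Lp *m (ind R s - ind R t)) t ord0.
Proof. by rewrite /eff_res /qform -mulmxA cV_dotC cV_dot_indB. Qed.

Lemma biharm_sqrE (R : rcfType) n (Lp : 'M[R]_n) s t : Lp^T = Lp ->
  biharm Lp s t ^+ 2
    = ((Lp *m (ind R s - ind R t))^T *m (Lp *m (ind R s - ind R t))) ord0 ord0.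
Proof.
move=> Lp_sym; set y := Lp *m _.
rewrite /biharm; have -> : qform (Lp *m Lp) (ind R s - ind R t) = (y^T *m y) ord0 ord0.
  by rewrite /qform /y trmx_mul Lp_sym !mulmxA.
by rewrite sqr_sqrtr ?cV_sqnorm_ge0.
Qed.

Section Laplacian.
Variables (R : realFieldType) (n : nat) (adj : rel 'I_n).
Hypothesis adj_sym : symmetric adj.
Local Notation a i j := ((adj i j)%:R : R).
Local Notation L := (laplacian R adj).

Definition dirichlet (x y : 'cV[R]_n) : R :=
  \sum_i \sum_j a i j * (x i ord0 - x j ord0) * (y i ord0 - y j ord0).

Lemma deg_sumE i : (deg adj i)%:R = \sum_j a i j.
Proof.
rewrite /deg -sum1_card natr_sum [RHS](bigID (adj i)) /= [X in _ + X]big1 ?addr0.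
  by apply: eq_big => [j|j]; rewrite ?inE // => ->.
by move=> j /negbTE ->.
Qed.

Lemma laplacian_mulE (x : 'cV[R]_n) i :
  (L *m x) i ord0 = \sum_j a i j * (x i ord0 - x j ord0).
Proof.
rewrite mxE (eq_bigr (fun j => (deg adj i)%:R *+ (i == j) * x j ord0 - a i j * x j ord0));
  last by move=> j _; rewrite mxE mulrBl.
rewrite sumrB (bigD1 i) //= big1 => [|j ji]; last by rewrite eq_sym (negbTE ji) mul0r.
rewrite eqxx mulr1n addr0 deg_sumE mulr_suml -sumrB.
by apply: eq_bigr => j _; rewrite mulrBr.
Qed.

Lemma laplacian_mul_const1 : L *m const_mx 1 = 0 :> 'cV[R]_n.
Proof.
apply/matrixP => i j; rewrite ord1 laplacian_mulE !mxE big1 // => k _.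
by rewrite mxE subrr mulr0.
Qed.

Lemma trmx_laplacian : L^T = L.
Proof. by apply/matrixP => i j; rewrite !mxE adj_sym eq_sym; case: eqP => [->|]. Qed.

Lemma laplacian_formE (x y : 'cV[R]_n) :
  (x^T *m L *m y) ord0 ord0 = dirichlet x y / 2.
Proof.
rewrite -mulmxA cV_dotE.
under eq_bigr do rewrite laplacian_mulE mulr_sumr.
set S := \sum_i _.
have S_swap : S = \sum_i \sum_j a i j * (- x j ord0 * (y i ord0 - y j ord0)).
  rewrite /S exchange_big; apply: eq_bigr => i _; apply: eq_bigr => j _.
  by rewrite adj_sym; ring.
have -> : S = (S + S) / 2 by field.
rewrite {2}S_swap -big_split; congr (_ / _); apply: eq_bigr => i _.
by rewrite -big_split; apply: eq_bigr => j _ /=; ring.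
Qed.

Lemma dirichlet_ge0 (x : 'cV[R]_n) : 0 <= dirichlet x x.
Proof.
by apply: sumr_ge0 => i _; apply: sumr_ge0 => j _; rewrite -mulrA -expr2 mulr_ge0 ?sqr_ge0.
Qed.

Lemma dirichlet_eq0_edge (x : 'cV[R]_n) i j :
  dirichlet x x = 0 -> adj i j -> x i ord0 = x j ord0.
Proof.
have term_ge0 k l : 0 <= a k l * (x k ord0 - x l ord0) * (x k ord0 - x l ord0).
  by rewrite -mulrA -expr2 mulr_ge0 ?sqr_ge0.
move=> D0 ij.
have row_i0 : \sum_l a i l * (x i ord0 - x l ord0) * (x i ord0 - x l ord0) = 0.
  by apply: (psumr_eq0P _ D0) => // k _; apply: sumr_ge0 => l _; apply: term_ge0.
have := @psumr_eq0P _ _ _ _ (fun l _ => term_ge0 i l) row_i0 j isT.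
by rewrite ij mul1r -expr2 => /eqP; rewrite sqrf_eq0 subr_eq0 => /eqP.
Qed.

Lemma dirichlet_eq0_ker (x : 'cV[R]_n) : dirichlet x x = 0 -> L *m x = 0.
Proof.
move=> D0; apply/matrixP => i k; rewrite ord1 laplacian_mulE mxE big1 // => j _.
by case: (boolP (adj i j)) => [/(dirichlet_eq0_edge D0)->|_]; rewrite ?subrr ?mulr0 ?mul0r.
Qed.

Lemma ker_dirichlet_eq0 (x : 'cV[R]_n) : L *m x = 0 -> dirichlet x x = 0.
Proof.
move=> Lx0; have := laplacian_formE x x; rewrite -mulmxA Lx0 mulmx0 mxE.
by move/esym/eqP; rewrite mulf_eq0 invr_eq0 pnatr_eq0 orbF => /eqP.
Qed.

Lemma dirichletB (x z : 'cV[R]_n) :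
  dirichlet (x - z) (x - z) = dirichlet x x - 2 * dirichlet x z + dirichlet z z.
Proof.
rewrite /dirichlet mulr_sumr -sumrB -big_split; apply: eq_bigr => i _.
rewrite mulr_sumr -sumrB -big_split; apply: eq_bigr => j _ /=.
by rewrite !mxE; ring.
Qed.

Lemma sum_adj_sqr_le (d : R) (g : 'I_n -> R) : (forall u, (deg adj u)%:R <= d) ->
  \sum_u \sum_v a u v * (g u ^+ 2 + g v ^+ 2) <= 2 * d * \sum_u g u ^+ 2.
Proof.
move=> deg_le.
have one_side : \sum_u \sum_v a u v * g u ^+ 2 <= d * \sum_u g u ^+ 2.
  rewrite mulr_sumr; apply: ler_sum => u _; rewrite -mulr_suml -deg_sumE.
  by rewrite ler_wpM2r ?sqr_ge0.
have swap : \sum_u \sum_v a u v * g v ^+ 2 = \sum_u \sum_v a u v * g u ^+ 2.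
  by rewrite exchange_big; apply: eq_bigr => u _; apply: eq_bigr => v _; rewrite adj_sym.
under eq_bigr do under eq_bigr do rewrite mulrDr.
rewrite (eq_bigr _ (fun u _ => big_split _ _ _ _ _)) big_split /= swap.
by rewrite -mulrA mulr2n mulrDl; lra.
Qed.

End Laplacian.

Lemma eff_res_ge0 (R : realFieldType) n (adj : rel 'I_n) (Lp : 'M[R]_n) s t :
  symmetric adj -> is_pinv (laplacian R adj) Lp -> 0 <= eff_res Lp s t.
Proof.
move=> adj_sym Lp_pinv; have Lp_sym := trmx_pinv (trmx_laplacian R adj_sym) Lp_pinv.
case: (Lp_pinv) => _ LpLLp _ _.
rewrite /eff_res /qform -{1}LpLLp -{1}Lp_sym !mulmxA -trmx_mul -mulmxA laplacian_formE //.
by rewrite divr_ge0 ?dirichlet_ge0.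
Qed.

Lemma natr_card_pairs (R : nzSemiRingType) (T : finType) (P : rel T) :
  #|[set p : T * T | P p.1 p.2]|%:R = \sum_u \sum_v (P u v)%:R :> R.
Proof.
rewrite -sum1_card natr_sum pair_bigA big_mkcond /=.
by apply: eq_bigr => -[u v] _; rewrite inE; case: (P u v).
Qed.

Lemma Theta_mul_pairs (R : numFieldType) n (adj : rel 'I_n) (S : {set 'I_n}) :
  (0 < #|S| * #|~: S|)%N ->
  Theta R adj S * (#|S| * #|~: S|)%:R = (n * cut_size adj S)%:R.
Proof. by move=> pairs_gt0; rewrite divfK // pnatr_eq0 -lt0n. Qed.

Section LayerCake.
Variables (R : realFieldType) (I : finType) (w : I -> R) (lo : R) (psi : R -> R).
Hypothesis lo_le_w : forall i, lo <= w i.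

(* [prev_value x] is [lo] when no value of [w] lies below [w x]. *)
Definition prev_value x : R := \big[Order.max/lo]_(y | w y < w x) w y.
Definition level_mult x : nat := #|[pred y | w y == w x]|.
Definition layer_weight x : R := (psi (w x) - psi (prev_value x)) / (level_mult x)%:R.

Lemma prev_value_le x : prev_value x <= w x.
Proof. by apply: bigmax_le => [|y /ltW]. Qed.

Lemma prev_value_ge x y : w y < w x -> w y <= prev_value x.
Proof. exact: le_bigmax_cond. Qed.

Lemma prev_valueP x y : w y < w x -> exists2 z, w z < w x & prev_value x = w z.
Proof.
move=> lt_yx; have [z lt_zx prev_z] :=
  eq_bigmax (x:=lo) y (fun y => w y < w x) w lt_yx (fun i _ => lo_le_w i).
by exists z.
Qed.

Lemma layer_weight_ge0 x : {homo psi : u v / u <= v} -> 0 <= layer_weight x.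
Proof. by move=> psi_mono; rewrite divr_ge0 // subr_ge0 psi_mono ?prev_value_le. Qed.

Lemma layer_weight_min x : w x = lo -> layer_weight x = 0.
Proof.
move=> wx_lo; rewrite /layer_weight /prev_value big_pred0 => [|y].
  by rewrite wx_lo subrr mul0r.
by rewrite wx_lo ltNge lo_le_w.
Qed.

Lemma sum_layer_weight_level u :
  \sum_(x | w x == w u) layer_weight x = psi (w u) - psi (prev_value u).
Proof.
rewrite (eq_bigr (fun=> layer_weight u)) => [|x /eqP wxu]; last first.
  by rewrite /layer_weight /prev_value /level_mult wxu.
have mult_gt0 : (level_mult u)%:R != 0 :> R.
  by rewrite pnatr_eq0 -lt0n; apply/card_gt0P; exists u; rewrite inE /=.
by rewrite sumr_const -mulr_natr divfK.
Qed.

Lemma sum_layer_weight u v : w v <= w u ->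
  \sum_(x | w v < w x <= w u) layer_weight x = psi (w u) - psi (w v).
Proof.
have [k] := ubnP #|[pred x | w v < w x <= w u]|.
elim: k u => // k IH u card_lt le_vu.
have [eq_uv|lt_vu] := eqVneq (w u) (w v).
  by rewrite eq_uv subrr big_pred0 // => x; rewrite lt_le_asym.
have {}lt_vu : w v < w u by rewrite lt_neqAle eq_sym lt_vu.
have [z lt_zu prev_u] := prev_valueP lt_vu.
have le_vz : w v <= w z by rewrite -prev_u prev_value_ge.
have card_z : (#|[pred x | (w v < w x <= w z)%R]| < k)%N.
  rewrite -ltnS; apply: leq_trans card_lt; rewrite ltnS; apply: proper_card.
  apply/properP; split; last by exists u; rewrite !inE /= ?lt_vu ?lexx // leNgt lt_zu andbF.
  by apply/subsetP => x; rewrite !inE /= => /andP[-> /le_trans/(_ (ltW lt_zu))].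
have top_level : \sum_(x | (w v < w x <= w u) && (w x == w u)) layer_weight x
    = psi (w u) - psi (w z).
  rewrite -prev_u -sum_layer_weight_level; apply: eq_bigl => x.
  by case: eqP => [->|]; rewrite ?andbF ?lt_vu ?lexx.
have lower_levels : \sum_(x | (w v < w x <= w u) && (w x != w u)) layer_weight x
    = psi (w z) - psi (w v).
  rewrite -IH //; apply: eq_bigl => x; rewrite -andbA; congr (_ && _).
  rewrite andbC -lt_neqAle; apply/idP/idP => [/prev_value_ge|le_xz].
    by rewrite prev_u.
  exact: le_lt_trans le_xz lt_zu.
by rewrite (bigID (fun x => w x == w u)) /= top_level lower_levels addrA subrK.
Qed.
End LayerCake.

Section SignedSquare.
Variable R : realFieldType.
Implicit Types p q l : R.

Lemma signed_sqr_mono : {homo (fun p : R => p * `|p|) : p q / p <= q}.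
Proof. by move=> p q le_pq; case: (ger0P p) => ?; case: (ger0P q) => ?; nra. Qed.

Lemma sqrB_le_signed_sqrB p q : (p - q) ^+ 2 <= 2 * `|p * `|p| - q * `|q| |.
Proof.
wlog le_qp : p q / q <= p.
  move=> hwlog; case: (leP q p) => [/hwlog//|/ltW/hwlog].
  by rewrite -sqrrN opprB distrC.
rewrite ger0_norm ?subr_ge0 ?signed_sqr_mono //.
have := sqr_ge0 (p + q).
by case: (ger0P p) => ?; case: (ger0P q) => ?; nra.
Qed.

Lemma signed_sqrB_le p q l : 0 <= l ->
  2 * l * `|p * `|p| - q * `|q| | <= l ^+ 2 * (p - q) ^+ 2 + 2 * (p ^+ 2 + q ^+ 2).
Proof.
move=> l_ge0; wlog le_qp : p q / q <= p.
  move=> hwlog; case: (leP q p) => [/hwlog//|/ltW/hwlog].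
  by rewrite (distrC (q * _)) -(sqrrN (q - p)) opprB (addrC (q ^+ 2)).
rewrite ger0_norm ?subr_ge0 ?signed_sqr_mono //.
have cross : p * `|p| - q * `|q| <= (p - q) * (`|p| + `|q|).
  by case: (ger0P p) => ?; case: (ger0P q) => ?; nra.
have := sqr_ge0 (l * (p - q) - (`|p| + `|q|)); have := sqr_ge0 (`|p| - `|q|).
rewrite -[p ^+ 2]real_normK ?num_real // -[q ^+ 2]real_normK ?num_real //.
nra.
Qed.
End SignedSquare.

Lemma sum_sqrB_mean (R : realFieldType) n (f : 'I_n -> R) : (0 < n)%N ->
  \sum_u \sum_v (f u - f v) ^+ 2 = 2 * n%:R * \sum_i (f i - (\sum_j f j) / n%:R) ^+ 2.
Proof.
move=> n_gt0; set c := (\sum_j f j) / n%:R.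
have centered : \sum_i (f i - c) = 0.
  by rewrite sumrB sumr_const card_ord -mulr_natr divfK ?subrr ?pnatr_eq0 -?lt0n.
transitivity (\sum_u \sum_v ((f u - c) ^+ 2 + (f v - c) ^+ 2 - 2 * (f u - c) * (f v - c))).
  by apply: eq_bigr => u _; apply: eq_bigr => v _; ring.
under eq_bigr => u _ do
  rewrite sumrB big_split /= sumr_const card_ord -mulr_sumr centered mulr0 subr0.
by rewrite big_split /= sumrMnl sumr_const card_ord !mulr_natr -mulrnDl -mulr2n; ring.
Qed.

Lemma sqr_le_of_quadratic (R : realFieldType) (a b c : R) : 0 <= a -> 0 <= b ->
  (forall l, 0 <= l -> 2 * l * b <= l ^+ 2 * a + c) -> b ^+ 2 <= a * c.
Proof.
move=> a_ge0 b_ge0 quad.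
have c_ge0 : 0 <= c by have := quad 0 (lexx 0); lra.
have [->|b_neq0] := eqVneq b 0; first by rewrite expr0n mulr_ge0.
have [a0|a_neq0] := eqVneq a 0.
  pose l := (c + 1) / (2 * b).
  have lb : 2 * l * b = c + 1 by rewrite /l; field; rewrite b_neq0.
  have := quad l; rewrite lb a0 divr_ge0 ?mulr_ge0 //; last by lra.
  by move=> /(_ isT); lra.
pose l := b / a.
have la : b = l * a by rewrite /l divfK.
have := quad l; rewrite divr_ge0 // la => /(_ isT) ineq.
by nra.
Qed.

Section Sweep.
Variables (R : realFieldType) (n : nat) (adj : rel 'I_n).
Hypothesis adj_sym : symmetric adj.
Variables (w : 'I_n -> R) (t : 'I_n).
Hypothesis w_min : forall i, w t <= w i.
Local Notation a u v := ((adj u v)%:R : R).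

Definition level_set x := [set y | w x <= w y].
Definition crossing u v x := w v < w x <= w u.

Lemma cut_level_setE x :
  (cut_size adj (level_set x))%:R = \sum_u \sum_v a u v * (crossing u v x)%:R.
Proof.
have := natr_card_pairs R (fun u v => [&& u \in level_set x, v \notin level_set x & adj u v]).
rewrite /= /cut_size => ->; apply: eq_bigr => u _; apply: eq_bigr => v _.
rewrite !inE -ltNge /crossing.
by case: (adj u v); case: (w x <= w u); case: (w v < w x); rewrite ?mulr1 ?mulr0.
Qed.

Lemma pairs_level_setE x :
  (#|level_set x| * #|~: level_set x|)%:R = \sum_u \sum_v (crossing u v x)%:R :> R.
Proof.
have := natr_card_pairs R (fun u v => (u \in level_set x) && (v \in ~: level_set x)).
rewrite -cardsX /= => ->; apply: eq_bigr => u _; apply: eq_bigr => v _.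
by rewrite !inE -ltNge /crossing andbC.
Qed.

Let mean := (\sum_i w i) / n%:R.
Let psi r := (r - mean) * `|r - mean|.
Let weight := layer_weight w (w t) psi.
Local Notation dpsi u v := `|psi (w u) - psi (w v)|.

Let psi_mono : {homo psi : r s / r <= s}.
Proof. by move=> r s le_rs; apply: signed_sqr_mono; rewrite lerD2r. Qed.

Lemma coarea_pair u v :
  \sum_x weight x * ((crossing u v x)%:R + (crossing v u x)%:R) = dpsi u v.
Proof.
wlog le_vu : u v / w v <= w u.
  move=> hwlog; case: (leP (w v) (w u)) => [/hwlog//|/ltW/hwlog].
  by rewrite distrC; under eq_bigr do rewrite addrC.
under eq_bigr do rewrite mulrDr !mulr_natr !mulrb.
rewrite big_split /= -!big_mkcond (sum_layer_weight psi w_min le_vu) big_pred0 => [|x].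
  by rewrite addr0 ger0_norm // subr_ge0 psi_mono.
apply/negbTE/negP => /andP[lt_ux le_xv].
by have := lt_le_trans lt_ux (le_trans le_xv le_vu); rewrite ltxx.
Qed.

Lemma sum_sym_coarea (F : 'I_n -> 'I_n -> R) : (forall u v, F u v = F v u) ->
  \sum_u \sum_v F u v * dpsi u v = 2 * \sum_x weight x * \sum_u \sum_v F u v * (crossing u v x)%:R.
Proof.
move=> F_sym.
transitivity (\sum_x weight x * \sum_u \sum_v F u v * ((crossing u v x)%:R + (crossing v u x)%:R)).
  under eq_bigr do under eq_bigr do rewrite -coarea_pair mulr_sumr.
  under eq_bigr do rewrite exchange_big.
  rewrite exchange_big; apply: eq_bigr => x _; rewrite mulr_sumr; apply: eq_bigr => u _.
  by rewrite mulr_sumr; apply: eq_bigr => v _; rewrite mulrCA.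
rewrite mulr_sumr; apply: eq_bigr => x _; rewrite mulrCA; congr (_ * _).
have swap : \sum_u \sum_v F u v * (crossing v u x)%:R = \sum_u \sum_v F u v * (crossing u v x)%:R.
  by rewrite exchange_big; apply: eq_bigr => u _; apply: eq_bigr => v _; rewrite F_sym.
under eq_bigr do under eq_bigr do rewrite mulrDr.
by rewrite (eq_bigr _ (fun u _ => big_split _ _ _ _ _)) big_split /= swap; ring.
Qed.

Lemma sweep_energy_le K :
  (forall x, w t < w x ->
     K * (#|level_set x| * #|~: level_set x|)%:R <= (n * cut_size adj (level_set x))%:R) ->
  K * \sum_u \sum_v dpsi u v <= n%:R * \sum_u \sum_v a u v * dpsi u v.
Proof.
move=> level_sweep.
have := @sum_sym_coarea (fun _ _ => 1) (fun _ _ => erefl).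
rewrite (eq_bigr _ (fun u _ => eq_bigr _ (fun v _ => mul1r _))) => ->.
rewrite (@sum_sym_coarea (fun u v => a u v)) => [|u v]; last by rewrite adj_sym.
rewrite mulrCA [X in _ <= X]mulrCA ler_pM2l // !mulr_sumr; apply: ler_sum => x _.
have [wx_min|lt_tx] := eqVneq (w x) (w t).
  by rewrite /weight layer_weight_min // !mul0r !mulr0.
have {}lt_tx : w t < w x by rewrite lt_neqAle eq_sym lt_tx w_min.
under eq_bigr do under eq_bigr do rewrite mul1r.
rewrite -pairs_level_setE -cut_level_setE mulrCA [X in _ <= X]mulrCA -natrM.
rewrite ler_wpM2l ?level_sweep //.
exact: layer_weight_ge0 w_min _ psi_mono.
Qed.

Let n_gt0 : (0 < n)%N. Proof. exact: leq_ltn_trans (ltn_ord t). Qed.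

Lemma sum_sqr_center_le_dpsi :
  n%:R * \sum_i (w i - mean) ^+ 2 <= \sum_u \sum_v dpsi u v.
Proof.
rewrite -(ler_pM2l (_ : 0 < 2)) // mulrA -sum_sqrB_mean // mulr_sumr.
apply: ler_sum => u _; rewrite mulr_sumr; apply: ler_sum => v _.
have := sqrB_le_signed_sqrB (w u - mean) (w v - mean).
by rewrite opprB addrA subrK.
Qed.

Lemma dpsi_edge_le d l : (forall u, (deg adj u)%:R <= d) -> 0 <= l ->
  2 * l * \sum_u \sum_v a u v * dpsi u v <=
  l ^+ 2 * dirichlet adj (\col_i w i) (\col_i w i) + 4 * d * \sum_i (w i - mean) ^+ 2.
Proof.
move=> deg_le l_ge0.
have := sum_adj_sqr_le adj_sym (fun u => w u - mean) deg_le.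
set S := \sum_u \sum_v _ => S_le.
have termwise : 2 * l * \sum_u \sum_v a u v * dpsi u v <=
    l ^+ 2 * dirichlet adj (\col_i w i) (\col_i w i) + 2 * S.
  rewrite /dirichlet /S !mulr_sumr -big_split /=; apply: ler_sum => u _.
  rewrite !mulr_sumr -big_split /=; apply: ler_sum => v _; rewrite !mxE.
  have := signed_sqrB_le (w u - mean) (w v - mean) l_ge0; rewrite opprB addrA subrK.
  by move/(ler_wpM2l (ler0n _ (adj u v))); rewrite /psi; lra.
by apply: le_trans termwise _; rewrite lerD2l; lra.
Qed.

Lemma sweep_level_set d s : (forall u, (deg adj u)%:R <= d) -> w t < w s ->
  exists x, w t < w x /\
    Theta R adj (level_set x) ^+ 2 * \sum_i (w i - mean) ^+ 2
      <= 4 * d * dirichlet adj (\col_i w i) (\col_i w i).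
Proof.
move=> deg_le lt_ts.
have [x lt_tx x_min] := @arg_minP _ _ _ s (fun x => w t < w x)
  (fun x => Theta R adj (level_set x)) lt_ts.
exists x; split => //.
set K := Theta R adj (level_set x); set Q := \sum_i _; set X := dirichlet _ _ _.
have pairs_gt0 y : w t < w y -> (0 < #|level_set y| * #|~: level_set y|)%N.
  move=> lt_ty; rewrite muln_gt0; apply/andP; split; apply/card_gt0P.
    by exists y; rewrite inE.
  by exists t; rewrite !inE -ltNge.
have K_ge0 : 0 <= K by rewrite /K /Theta divr_ge0.
have Q_ge0 : 0 <= Q by rewrite sumr_ge0 // => i _; rewrite sqr_ge0.
have d_ge0 : 0 <= d by apply: le_trans (deg_le t).
have level_sweep y : w t < w y ->
    K * (#|level_set y| * #|~: level_set y|)%:R <= (n * cut_size adj (level_set y))%:R.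
  by move=> lt_ty; rewrite -Theta_mul_pairs ?pairs_gt0 // ler_wpM2r ?x_min.
have quad l : 0 <= l -> 2 * l * (K * Q) <= l ^+ 2 * X + 4 * d * Q.
  (* n (2 l K Q) <= 2 l K (sum |dpsi|) <= 2 l n (sum a |dpsi|) <= n (l^2 X + 4 d Q) *)
  move=> l_ge0; have n_gt0R : 0 < n%:R :> R by rewrite ltr0n.
  have two_l_ge0 : 0 <= 2 * l by rewrite mulr_ge0.
  have sweep := ler_wpM2l two_l_ge0 (sweep_energy_le level_sweep).
  have lower := ler_wpM2l (mulr_ge0 two_l_ge0 K_ge0) sum_sqr_center_le_dpsi.
  have upper := ler_wpM2l (ltW n_gt0R) (dpsi_edge_le deg_le l_ge0).
  by rewrite -(ler_pM2l n_gt0R) /Q /X; lra.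
have := sqr_le_of_quadratic (dirichlet_ge0 _ _) (mulr_ge0 K_ge0 Q_ge0) quad.
have [->|Q_neq0] := eqVneq Q 0; first by move=> _; rewrite mulr0 !mulr_ge0 ?dirichlet_ge0.
have Q_gt0 : 0 < Q by rewrite lt_def Q_neq0.
by rewrite -/X => sq; rewrite -(ler_pM2r Q_gt0); nra.
Qed.
End Sweep.

Definition clamp (R : realDomainType) (lo hi x : R) := Num.min (Num.max x lo) hi.

Lemma clamp_sqrB_le (R : realFieldType) (lo hi x y : R) :
  (clamp lo hi x - clamp lo hi y) ^+ 2 <= (x - y) ^+ 2.
Proof.
wlog le_yx : x y / y <= x.
  move=> hwlog; case: (leP y x) => [/hwlog//|/ltW/hwlog].
  by rewrite -sqrrN opprB -[(x - y) ^+ 2]sqrrN opprB.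
have : 0 <= clamp lo hi x - clamp lo hi y <= x - y.
  rewrite /clamp; case: (leP x lo) => ?; case: (leP y lo) => ?;
    case: (leP lo hi) => ?; case: (leP x hi) => ?; case: (leP y hi) => ?; apply/andP; split; lra.
by case/andP=> ? ?; rewrite ler_sqr ?nnegrE //; lra.
Qed.

Lemma clamp_id (R : realDomainType) (lo hi x : R) : lo <= x <= hi -> clamp lo hi x = x.
Proof. by case/andP=> lo_x x_hi; rewrite /clamp (max_l lo_x) (min_l x_hi). Qed.

Lemma clamp_le (R : realDomainType) (lo hi x : R) : clamp lo hi x <= hi.
Proof. by rewrite /clamp ge_min lexx orbT. Qed.

Lemma clamp_ge (R : realDomainType) (lo hi x : R) : lo <= hi -> lo <= clamp lo hi x.
Proof. by move=> lo_hi; rewrite /clamp le_min lo_hi le_max lexx orbT. Qed.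

Section Potential.
Variables (R : realFieldType) (n : nat) (adj : rel 'I_n).
Hypothesis adj_sym : symmetric adj.
Local Notation L := (laplacian R adj).
Variables (s t : 'I_n).
Local Notation b := (ind R s - ind R t).

Lemma ker_level_set_cut0 (u : 'cV[R]_n) x :
  L *m u = 0 -> cut_size adj (level_set (fun i => u i ord0) x) = 0%N.
Proof.
move=> /(ker_dirichlet_eq0 adj_sym) Du0; apply/eqP; rewrite cards_eq0; apply/eqP/setP => -[p q].
rewrite !inE /=; apply/negbTE/and3P => -[p_in q_out /(dirichlet_eq0_edge Du0) upq].
by move: q_out; rewrite -upq p_in.
Qed.

Lemma residual_cut0 (y : 'cV[R]_n) : L *m (b - L *m y) = 0 -> L *m y != b ->
  exists S : {set 'I_n}, [/\ s \in S, t \notin S & cut_size adj S = 0%N].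
Proof.
set u := b - L *m y => Lu0 Ly_neq; have u_neq0 : u != 0 by rewrite subr_eq0 eq_sym.
have uTL : u^T *m L = 0 by rewrite -(trmx_laplacian R adj_sym) -trmx_mul Lu0 trmx0.
have := cV_sqnorm_gt0 u_neq0; rewrite {2}/u mulmxBr mulmxA uTL mul0mx subr0 cV_dot_indB subr_gt0.
move=> lt_ts; exists (level_set (fun i => u i ord0) s); split.
- by rewrite inE.
- by rewrite inE -ltNge.
- exact: ker_level_set_cut0.
Qed.

Lemma dirichlet_clamp_le (y : 'cV[R]_n) lo hi :
  dirichlet adj (\col_i clamp lo hi (y i ord0)) (\col_i clamp lo hi (y i ord0))
    <= dirichlet adj y y.
Proof.
apply: ler_sum => i _; apply: ler_sum => j _; rewrite !mxE -!mulrA -!expr2.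
by rewrite ler_wpM2l ?ler0n ?clamp_sqrB_le.
Qed.

Lemma dirichlet_potentialE (x y : 'cV[R]_n) :
  L *m y = b -> dirichlet adj x y = 2 * (x s ord0 - x t ord0).
Proof.
by move=> Ly_b; have := laplacian_formE adj_sym x y; rewrite -mulmxA Ly_b cV_dot_indB => ->; field.
Qed.

Lemma potential_lt (y : 'cV[R]_n) : s != t -> L *m y = b -> y t ord0 < y s ord0.
Proof.
move=> s_neq_t Ly_b; have Dy_neq0 : dirichlet adj y y != 0.
  apply/negP => /eqP/dirichlet_eq0_ker; rewrite Ly_b => /matrixP/(_ s ord0).
  by rewrite !mxE !eqxx (negbTE s_neq_t) subr0 => /eqP; rewrite oner_eq0.
have := dirichlet_ge0 adj y; rewrite le_eqVlt eq_sym (negbTE Dy_neq0) /=.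
by rewrite (dirichlet_potentialE y Ly_b); lra.
Qed.

Lemma clamp_potential_ker (y : 'cV[R]_n) : L *m y = b -> y t ord0 <= y s ord0 ->
  L *m (\col_i clamp (y t ord0) (y s ord0) (y i ord0) - y) = 0.
Proof.
set z := \col_i _ => Ly_b le_ts.
have z_end : z s ord0 - z t ord0 = y s ord0 - y t ord0.
  by rewrite !mxE !clamp_id ?lexx ?le_ts.
(* [z] and [y] agree at [s] and [t], so [dirichlet z y = dirichlet y y] and the
   energy of [z - y] is [dirichlet z z - dirichlet y y <= 0]. *)
apply: dirichlet_eq0_ker; apply/eqP; rewrite eq_le dirichlet_ge0 andbT dirichletB.
rewrite !(dirichlet_potentialE _ Ly_b) z_end.
by have := dirichlet_clamp_le y (y t ord0) (y s ord0); rewrite (dirichlet_potentialE y Ly_b); lra.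
Qed.

Lemma orth_ker_sqnorm_le (y : 'cV[R]_n) (z : 'I_n -> R) :
  (forall k : 'cV[R]_n, L *m k = 0 -> y^T *m k = 0) -> L *m (\col_i z i - y) = 0 ->
  (y^T *m y) ord0 ord0 <= \sum_i (z i - (\sum_j z j) / n%:R) ^+ 2.
Proof.
move=> y_orth Lzy0; set c := _ / _.
set k := \col_i z i - y - c *: const_mx 1.
have Lk0 : L *m k = 0 by rewrite mulmxBr -scalemxAr laplacian_mul_const1 scaler0 Lzy0 subr0.
have /(congr1 (fun M : 'M_1 => M ord0 ord0)) := y_orth k Lk0; rewrite cV_dotE mxE => yk0.
have -> : \sum_i (z i - c) ^+ 2 =
    (y^T *m y) ord0 ord0 + 2 * \sum_i y i ord0 * k i ord0 + \sum_i k i ord0 ^+ 2.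
  rewrite cV_dotE mulr_sumr -!big_split; apply: eq_bigr => i _ /=; rewrite !mxE; ring.
by rewrite yk0 mulr0 addr0 lerDl sumr_ge0 // => i _; rewrite sqr_ge0.
Qed.

Lemma potential_sweep_cut (y : 'cV[R]_n) : s != t -> L *m y = b ->
  (forall k : 'cV[R]_n, L *m k = 0 -> y^T *m k = 0) ->
  exists S : {set 'I_n}, [/\ s \in S, t \notin S &
    (y^T *m y) ord0 ord0 * Theta R adj S ^+ 2 <= 8 * (dmax adj)%:R * (y s ord0 - y t ord0)].
Proof.
move=> s_neq_t Ly_b y_orth; have lt_ts := potential_lt s_neq_t Ly_b.
pose w i := clamp (y t ord0) (y s ord0) (y i ord0).
have [wt ws] : w t = y t ord0 /\ w s = y s ord0 by rewrite /w !clamp_id ?lexx ?ltW.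
have w_min i : w t <= w i by rewrite wt clamp_ge ?ltW.
have lt_wts : w t < w s by rewrite wt ws.
have deg_le u : (deg adj u)%:R <= (dmax adj)%:R :> R by rewrite ler_nat; apply: leq_bigmax.
have [x [lt_tx sweep]] := sweep_level_set adj_sym w_min deg_le lt_wts.
exists (level_set w x); split; first by rewrite inE ws; apply: clamp_le.
  by rewrite inE -ltNge.
have norm_le : (y^T *m y) ord0 ord0 <= \sum_i (w i - (\sum_j w j) / n%:R) ^+ 2.
  exact: orth_ker_sqnorm_le y_orth (clamp_potential_ker Ly_b (ltW lt_ts)).
have energy_le : dirichlet adj (\col_i w i) (\col_i w i) <= dirichlet adj y y.
  exact: dirichlet_clamp_le.
have d_ge0 : 0 <= 4 * (dmax adj)%:R :> R by rewrite mulr_ge0 ?ler0n.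
have := ler_wpM2r (sqr_ge0 (Theta R adj (level_set w x))) norm_le.
have := ler_wpM2l d_ge0 energy_le.
by rewrite (dirichlet_potentialE y Ly_b); lra.
Qed.
End Potential.

Theorem theoremE3 (R : realType) :
  exists C : R, 0 < C /\
  forall (n : nat) (adj : rel 'I_n) (Lp : 'M[R]_n) (s t : 'I_n),
    simple_graph adj ->
    is_pinv (laplacian R adj) Lp ->
    s != t ->
    exists S : {set 'I_n},
      [/\ s \in S, t \notin S &
          biharm Lp s t ^+ 2 * Theta R adj S ^+ 2
            <= C * (dmax adj)%:R * eff_res Lp s t].
Proof.
exists 8; split => // n adj Lp s t [adj_sym _] Lp_pinv s_neq_t.
have L_sym := trmx_laplacian R adj_sym.
have Lp_sym := trmx_pinv L_sym Lp_pinv.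
set y := Lp *m (ind R s - ind R t).
have [Ly_b|Ly_neq] := eqVneq (laplacian R adj *m y) (ind R s - ind R t).
  have [S [sS tS bound]] := potential_sweep_cut adj_sym s_neq_t Ly_b
    (pinv_orth_ker L_sym Lp_pinv (ind R s - ind R t)).
  by exists S; split; rewrite // biharm_sqrE // eff_resE.
have [S [sS tS cut0]] := residual_cut0 adj_sym (pinv_residual_ker L_sym Lp_pinv _) Ly_neq.
exists S; split => //.
rewrite /Theta cut0 muln0 mul0r expr0n /= mulr0.
by rewrite mulr_ge0 ?mulr_ge0 ?ler0n // (eff_res_ge0 _ _ adj_sym Lp_pinv).
Qed.
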